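(* Let $A,B$ be abstract state spaces and let $\omega\in A\otimes_{\max}B$ be a state that is steering for its $B$-marginal $\omega^B$. Then $\hat\omega(A^*_+)=\mathrm{Face}(\omega^B)$, the smallest face of $B_+$ containing $\omega^B$.
   Context: An abstract state space is a pair $(A,u_A)$ where $A$ is a finite-dimensional real vector space with a closed, pointed, generating convex cone $A_+$, and $u_A$ is an interior point of the dual cone $A^*_+$. An effect on $A$ is $a\in A^*_+$ with $a\le u_A$; an observable on $A$ is a finite family of effects $\{a_i\}$ with $\sum_i a_i=u_A$. $A\otimes_{\max}B$ is the space of bilinear forms on $A^*\times B^*$ nonnegative on $A^*_+\times B^*_+$; a state is such a form with $\omega(u_A,u_B)=1$; $\hat\omega:A^*\to B$ is $\hat\omega(a)(b)=\omega(a,b)$ and $\omega^B=\hat\omega(u_A)$. An ensemble for $\beta\in B_+$ is a finite family $\beta_i\in B_+$ with $\sum_i\beta_i=\beta$. $\omega$ is steering for its $B$-marginal if for every ensemble $\{\beta_i\}$ for $\omega^B$ there is an observable $\{x_i\}$ on $A$ with $\hat\omega(x_i)=\beta_i$ for all $i$. A face of $B_+$ is a subcone $F_+$ such that $x,y\in B_+$, $x+y\in F_+$ imply $x,y\in F_+$. *)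

From HB Require Import structures.
From mathcomp Require Import all_boot all_order all_algebra.
From mathcomp Require Import all_classical all_reals all_analysis.
Set Implicit Arguments. Unset Strict Implicit. Unset Printing Implicit Defensive.
Import Order.TTheory GRing.Theory Num.Theory.
Import numFieldNormedType.Exports.
Local Open Scope classical_set_scope.
Local Open Scope ring_scope.

(* A finite-dimensional real vector space of dimension n is modelled as the
   column vectors 'cV[R]_n; its dual A^* as row vectors 'rV[R]_n, with the
   canonical pairing <a, x> = a *m x. *)
Section Defs.
Variable R : realType.

Definition pair n (a : 'rV[R]_n) (x : 'cV[R]_n) : R := (a *m x) ord0 ord0.

Definition convex_cone {T : lmodType R} (K : set T) : Prop :=
  K 0 /\ (forall x y, K x -> K y -> K (x + y)) /\
  (forall (t : R) x, 0 <= t -> K x -> K (t *: x)).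

Definition pointed_cone {T : lmodType R} (K : set T) : Prop :=
  forall x, K x -> K (- x) -> x = 0.

Definition generating_cone {T : lmodType R} (K : set T) : Prop :=
  forall x, exists y z, [/\ K y, K z & x = y - z].

Definition proper_cone n (K : set 'cV[R]_n) : Prop :=
  [/\ convex_cone K, closed K, pointed_cone K & generating_cone K].

Definition dual_cone n (K : set 'cV[R]_n) : set 'rV[R]_n :=
  [set a | forall x, K x -> 0 <= pair a x].

Record state_space n := StateSpace {
  cone : set 'cV[R]_n;
  unit : 'rV[R]_n;
  cone_proper : proper_cone cone;
  unit_interior : interior (dual_cone cone) unit
}.

Section Ops.
Variables (n m : nat) (A : state_space n) (B : state_space m).

Definition effect (a : 'rV[R]_n) : Prop :=
  dual_cone (cone A) a /\ dual_cone (cone A) (unit A - a).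

Definition observable k (x : 'I_k -> 'rV[R]_n) : Prop :=
  (forall i, effect (x i)) /\ \sum_(i < k) x i = unit A.

(* bilinear form on A^* x B^* represented by W : omega(a,b) = a W b^T *)
Definition bil (W : 'M[R]_(n, m)) (a : 'rV[R]_n) (b : 'rV[R]_m) : R :=
  (a *m W *m b^T) ord0 ord0.

Definition max_tensor (W : 'M[R]_(n, m)) : Prop :=
  forall a b, dual_cone (cone A) a -> dual_cone (cone B) b -> 0 <= bil W a b.

Definition is_state (W : 'M[R]_(n, m)) : Prop :=
  max_tensor W /\ bil W (unit A) (unit B) = 1.

(* \hat omega : A^* -> B,  \hat omega(a)(b) = omega(a,b) *)
Definition hat (W : 'M[R]_(n, m)) (a : 'rV[R]_n) : 'cV[R]_m := (a *m W)^T.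

Definition marginalB (W : 'M[R]_(n, m)) : 'cV[R]_m := hat W (unit A).

Definition ensemble (beta : 'cV[R]_m) k (b : 'I_k -> 'cV[R]_m) : Prop :=
  (forall i, cone B (b i)) /\ \sum_(i < k) b i = beta.

Definition steering (W : 'M[R]_(n, m)) : Prop :=
  forall k (b : 'I_k -> 'cV[R]_m), ensemble (marginalB W) b ->
    exists x : 'I_k -> 'rV[R]_n, observable x /\ forall i, hat W (x i) = b i.

Definition is_face (F : set 'cV[R]_m) : Prop :=
  [/\ F `<=` cone B, convex_cone F &
      forall x y, cone B x -> cone B y -> F (x + y) -> F x /\ F y].

Definition Face (beta : 'cV[R]_m) : set 'cV[R]_m :=
  [set x | forall F, is_face F -> F beta -> F x].

End Ops.
End Defs.

From HB Require Import structures.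
From mathcomp Require Import all_boot all_order all_algebra.
From mathcomp Require Import all_classical all_reals all_analysis.
From mathcomp Require Import ring lra.
Set Implicit Arguments. Unset Strict Implicit. Unset Printing Implicit Defensive.
Import Order.TTheory GRing.Theory Num.Theory.
Import numFieldNormedType.Exports.
Local Open Scope classical_set_scope.
Local Open Scope ring_scope.

(* Steering lets any decomposition of the marginal be realised by effects on
   A, so the image hat(A^*_+) is a face of B_+; it contains omega^B = hat(u_A).
   Conversely, since u_A is interior to A^*_+, for every a some t > 0 has
   u_A - t a in A^*_+, so t hat(a) is a summand of omega^B in B_+ (hat maps
   A^*_+ into B_+ because the closed cone B_+ equals its bidual, proved by
   projecting onto B_+); hence hat(a) lies in every face containing omega^B. *)

Section EuclideanSeparation.
Variables (R : realType) (n : nat).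
Implicit Types (x y c d k : 'rV[R]_n) (K : set 'rV[R]_n).

Definition dot x y : R := \sum_i x ord0 i * y ord0 i.

Lemma dotDr x y z : dot x (y + z) = dot x y + dot x z.
Proof. by rewrite /dot -big_split; apply: eq_bigr => i _; rewrite !mxE mulrDr. Qed.

Lemma dotNl x y : dot (- x) y = - dot x y.
Proof. by rewrite /dot -sumrN; apply: eq_bigr => i _; rewrite mxE mulNr. Qed.

Lemma dotNr x y : dot x (- y) = - dot x y.
Proof. by rewrite /dot -sumrN; apply: eq_bigr => i _; rewrite mxE mulrN. Qed.

Lemma dot_subZ x y (t : R) :
  dot (x - t *: y) (x - t *: y) = dot x x - 2 * t * dot x y + t ^+ 2 * dot y y.
Proof.
rewrite /dot !mulr_sumr -sumrN -!big_split /=; apply: eq_bigr => i _.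
rewrite !mxE; ring.
Qed.

Lemma dot_coord_le x i : x ord0 i * x ord0 i <= dot x x.
Proof.
by rewrite /dot (bigD1 i) //= lerDl; apply: sumr_ge0 => j _; rewrite -expr2 sqr_ge0.
Qed.

Lemma dot_ge0 x : 0 <= dot x x.
Proof. by apply: sumr_ge0 => i _; rewrite -expr2 sqr_ge0. Qed.

Lemma dot_eq0 x : dot x x = 0 -> x = 0.
Proof.
move=> x0; apply/matrixP => i j; rewrite mxE (ord1 i).
have := dot_coord_le x j; rewrite x0 -expr2 => xj.
by apply/eqP; rewrite -sqrf_eq0 eq_le xj sqr_ge0.
Qed.

Lemma continuous_sqdist c : continuous (fun v : 'rV[R]_n => dot (c - v) (c - v)).
Proof.
have sum_cont (I : Type) (r : seq I) (F : I -> 'rV[R]_n -> R) :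
    (forall i, continuous (F i)) -> continuous (fun v => \sum_(i <- r) F i v).
  move=> Fcont; elim: r => [|i r IH].
    under eq_fun do rewrite big_nil.
    exact: cst_continuous.
  under eq_fun do rewrite big_cons.
  by move=> v; apply: continuousD; [exact: Fcont | exact: IH].
apply: sum_cont => i v.
have coord_cont : continuous (fun v : 'rV[R]_n => (c - v) ord0 i).
  under eq_fun do rewrite !mxE.
  by move=> w; apply: continuousB; [exact: cst_continuous | exact: coord_continuous].
by apply: continuousM; apply: coord_cont.
Qed.

Lemma ge0_affine_near0 (a q : R) :
  0 <= q -> (forall t, 0 < t <= 1 -> 0 <= t * q + a) -> 0 <= a.
Proof.
move=> q0 H; rewrite leNgt; apply/negP => a0.
pose t := - a / (q - a).
have tq : t * (q - a) = - a by rewrite /t mulfVK // gt_eqF //; lra.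
have t0 : 0 < t by rewrite /t divr_gt0 ?oppr_gt0 //; lra.
have t1 : t <= 1 by rewrite /t ler_pdivrMr; lra.
have := H t; rewrite t0 t1 => /(_ isT).
have -> : t * q + a = t * a by nra.
by rewrite pmulr_rge0 // leNgt a0.
Qed.

(* The bound that confines the search for a point of a cone nearest to [c]
   to a compact box. *)
Lemma sqdist_gt_outside_box c (p : 'rV[R]_n) i :
  \sum_j `|c ord0 j| + 1 + dot c c < `|p ord0 i| ->
  dot c c < dot (c - p) (c - p).
Proof.
move=> hM; have := dot_coord_le (c - p) i; rewrite !mxE.
set x := c ord0 i - p ord0 i.
have cx : `|c ord0 i| <= \sum_j `|c ord0 j|.
  by rewrite (bigD1 i) //= lerDl; apply: sumr_ge0.
have px : `|p ord0 i| <= `|x| + `|c ord0 i|.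
  have -> : p ord0 i = - x + c ord0 i by rewrite /x; ring.
  by rewrite (le_trans (ler_normD _ _)) // normrN.
have xx : x * x = `|x| * `|x| by rewrite -normrM ger0_norm // -expr2 sqr_ge0.
have := dot_ge0 c; rewrite xx; nra.
Qed.

Lemma closed_nearest_point K c : closed K -> K 0 ->
  exists2 k0, K k0 & forall k, K k -> dot (c - k0) (c - k0) <= dot (c - k) (c - k).
Proof.
move=> Kcl K0; pose f v := dot (c - v) (c - v).
pose M := \sum_j `|c ord0 j| + 1 + dot c c.
have M0 : 0 <= M by rewrite /M !addr_ge0 ?dot_ge0 ?sumr_ge0.
pose box := [set v : 'rV[R]_n | forall i, `[- M, M]%classic (v ord0 i)].
have box0 : box 0 by move=> i /=; rewrite mxE in_itv /=; apply/andP; split; lra.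
have [k0 k0S k0min] : exists2 k0, k0 \in box `&` K &
    forall k, k \in box `&` K -> f k0 <= f k.
  apply: EVT_min_rV; first by exists 0.
    apply: compact_closedI => //.
    by apply: (@rV_compact _ _ (fun=> `[- M, M]%classic)) => i; apply: segment_compact.
  exact/continuous_subspaceT/continuous_sqdist.
move: k0S; rewrite inE => -[_ Kk0]; exists k0 => // k Kk.
have [kbox | /existsNP [i /= kout]] := pselect (box k); first by apply: k0min; rewrite inE.
have /sqdist_gt_outside_box/ltW : M < `|k ord0 i|.
  by move: kout; rewrite in_itv /= -ler_norml => /negP; rewrite -ltNge.
apply: le_trans; have := k0min 0; rewrite /f subr0 inE; apply.
by split.
Qed.

Section NearestPointInCone.
Variables (K : set 'rV[R]_n) (c k0 : 'rV[R]_n).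
Hypotheses (Kk0 : K k0)
  (k0_nearest : forall k, K k -> dot (c - k0) (c - k0) <= dot (c - k) (c - k)).

Lemma nearest_point_variation v :
  (forall t, 0 < t <= 1 -> K (k0 + t *: v)) -> dot (c - k0) v <= 0.
Proof.
move=> Kv; suff : 0 <= - 2 * dot (c - k0) v by lra.
apply: (ge0_affine_near0 (dot_ge0 v)) => t t01.
have := k0_nearest (Kv t t01); rewrite opprD addrA dot_subZ => h.
have /andP[t0 _] := t01.
have : 0 <= t * (t * dot v v + - 2 * dot (c - k0) v) by nra.
by rewrite pmulr_rge0.
Qed.

Lemma nearest_point_cone_normal : convex_cone K ->
  (forall k, K k -> dot (c - k0) k <= 0) /\ 0 <= dot (c - k0) k0.
Proof.
move=> [_ [KD KZ]]; split=> [k Kk|].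
  by apply: nearest_point_variation => t /andP[t0 _]; apply/KD/KZ => //; exact: ltW.
rewrite -oppr_le0 -dotNr.
apply: nearest_point_variation => t /andP[_ t1].
rewrite scalerN -scaleNr -[X in X + _]scale1r -scalerDl.
by apply: KZ => //; lra.
Qed.

End NearestPointInCone.

Lemma closed_cone_separation K c : closed K -> convex_cone K -> ~ K c ->
  exists d, (forall k, K k -> dot d k <= 0) /\ 0 < dot d c.
Proof.
move=> Kcl Kcone Kc; have [k0 Kk0 k0min] := closed_nearest_point c Kcl Kcone.1.
have [dK dk0] := nearest_point_cone_normal Kk0 k0min Kcone.
exists (c - k0); split=> //.
have dd : 0 < dot (c - k0) (c - k0).
  rewrite lt_neqAle dot_ge0 andbT eq_sym; apply/eqP => /dot_eq0/eqP.
  by rewrite subr_eq0 => /eqP ck0; apply: Kc; rewrite ck0.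
by rewrite -[X in dot _ X](subrK k0) dotDr; lra.
Qed.

End EuclideanSeparation.

Lemma continuous_trmx (R : realType) n : continuous (fun v : 'rV[R]_n => v^T).
Proof.
move=> u S /nbhs_ballP[e /= e0 eS]; apply/nbhs_ballP; exists e => //= v [_ uv].
by apply: eS; split=> // i j; rewrite !mxE; apply: uv.
Qed.

Lemma interior_subZ (R : realType) (V : normedModType R) (S : set V) (u a : V) :
  interior S u -> exists2 t : R, 0 < t & S (u - t *: a).
Proof.
move=> /nbhs_ballP [e /= e0 Se].
have a1 : 0 < `|a| + 1 by rewrite ltr_wpDl.
exists (e / (`|a| + 1)); first by rewrite divr_gt0.
apply: Se; rewrite -ball_normE /= opprB addrC subrK normrZ gtr0_norm ?divr_gt0 //.
by rewrite mulrAC ltr_pdivrMr // ltr_pM2l //; lra.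
Qed.

Section ConeDuality.
Variables (R : realType) (n : nat).
Implicit Types (K : set 'cV[R]_n) (a : 'rV[R]_n).

Lemma pairD a b x : pair (a + b) x = pair a x + pair b x.
Proof. by rewrite /pair mulmxDl mxE. Qed.

Lemma pairZ (t : R) a x : pair (t *: a) x = t * pair a x.
Proof. by rewrite /pair -scalemxAl mxE. Qed.

Lemma pair_dot a x : pair a x = dot a x^T.
Proof. by rewrite /pair /dot mxE; apply: eq_bigr => j _; rewrite !mxE. Qed.

Lemma dual_cone_convex K : convex_cone (dual_cone K).
Proof.
split; first by move=> x _; rewrite /pair mul0mx mxE.
split=> [a b Ka Kb x Kx | t a t0 Ka x Kx].
  by rewrite pairD addr_ge0 //; [apply: Ka | apply: Kb].
by rewrite pairZ mulr_ge0 //; apply: Ka.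
Qed.

Lemma closed_cone_bidual K x : closed K -> convex_cone K ->
  (forall a, dual_cone K a -> 0 <= pair a x) -> K x.
Proof.
move=> Kcl [K0 [KD KZ]] Kx; apply: contrapT => nKx.
pose Kt := [set v : 'rV[R]_n | K v^T].
have Ktcl : closed Kt.
  by apply: (preimage_closed (f := fun v : 'rV[R]_n => v^T)) => // v _; apply: continuous_trmx.
have Ktcone : convex_cone Kt.
  split; first by rewrite /Kt /= trmx0.
  split=> [u v | t v t0]; rewrite /Kt /= ?linearD ?linearZ; [exact: KD | exact: KZ].
have nKtx : ~ Kt x^T by rewrite /Kt /= trmxK.
have [d [dK dx]] := closed_cone_separation Ktcl Ktcone nKtx.
have : dual_cone K (- d).
  by move=> k Kk; rewrite pair_dot dotNl oppr_ge0; apply: dK; rewrite /Kt /= trmxK.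
by move/Kx; rewrite pair_dot dotNl oppr_ge0 leNgt dx.
Qed.

Lemma convex_cone_scale_inv (T : lmodType R) (K : set T) (t : R) v :
  convex_cone K -> 0 < t -> K (t *: v) -> K v.
Proof.
move=> [_ [_ KZ]] t0 /(KZ t^-1); rewrite invr_ge0 ltW // => /(_ isT).
by rewrite scalerA mulVf ?gt_eqF // scale1r.
Qed.

End ConeDuality.

Section HatMap.
Variables (R : realType) (n m : nat) (W : 'M[R]_(n, m)).

Lemma hatD a b : hat W (a + b) = hat W a + hat W b.
Proof. by rewrite /hat mulmxDl linearD. Qed.

Lemma hatZ (t : R) a : hat W (t *: a) = t *: hat W a.
Proof. by rewrite /hat -scalemxAl linearZ. Qed.

Lemma hat0 : hat W 0 = 0.
Proof. by rewrite /hat mul0mx trmx0. Qed.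

Lemma bil_pair a b : bil W a b = pair b (hat W a).
Proof.
by rewrite /bil /pair /hat -[in LHS](trmxK (a *m W *m b^T)) trmx_mul trmxK mxE.
Qed.

Lemma convex_cone_hat_image (S : set 'rV[R]_n) :
  convex_cone S -> convex_cone (hat W @` S).
Proof.
move=> [S0 [SD SZ]]; split; first by exists 0; rewrite ?hat0.
split=> [_ _ [a Sa <-] [b Sb <-] | t _ t0 [a Sa <-]].
  by exists (a + b); rewrite ?hatD //; apply: SD.
by exists (t *: a); rewrite ?hatZ //; apply: SZ.
Qed.

End HatMap.

Section StateSpaces.
Variables (R : realType) (n m : nat) (A : state_space R n) (B : state_space R m).
Variable W : 'M[R]_(n, m).
Hypothesis W_max : max_tensor A B W.

Lemma unit_dual_cone : dual_cone (cone A) (unit A).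
Proof. exact: interior_subset (unit_interior A). Qed.

Lemma max_tensor_hat_cone a : dual_cone (cone A) a -> cone B (hat W a).
Proof.
move=> Aa; have [Bcone Bcl _ _] := cone_proper B.
apply: closed_cone_bidual Bcl Bcone _ => b Bb.
by rewrite -bil_pair; apply: W_max.
Qed.

Lemma marginal_split a :
  exists2 t : R, 0 < t & cone B (hat W (unit A - t *: a)) /\
    marginalB A W = t *: hat W a + hat W (unit A - t *: a).
Proof.
have [t t0 At] := interior_subZ a (unit_interior A).
exists t => //; split; first exact: max_tensor_hat_cone.
by rewrite -hatZ -hatD addrC subrK.
Qed.

Lemma hat_dual_cone_sub_face F : is_face B F -> F (marginalB A W) ->
  hat W @` dual_cone (cone A) `<=` F.
Proof.
move=> [_ Fcone Fface] Fw _ [a Aa <-].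
have [t t0 [Brest split_w]] := marginal_split a.
have Bta : cone B (t *: hat W a).
  by rewrite -hatZ; apply/max_tensor_hat_cone/(dual_cone_convex _).2.2 => //; exact: ltW.
have [Fta _] := Fface _ _ Bta Brest ltac:(by rewrite -split_w).
exact: convex_cone_scale_inv Fcone t0 Fta.
Qed.

Lemma is_face_hat_dual_cone : steering A B W -> is_face B (hat W @` dual_cone (cone A)).
Proof.
move=> steer; have [[_ [_ BZ]] _ _ _] := cone_proper B.
split; first by move=> _ [a Aa <-]; exact: max_tensor_hat_cone.
  exact/convex_cone_hat_image/dual_cone_convex.
move=> x y Bx By [a _ xy].
have [t t0 [Brest split_w]] := marginal_split a.
pose b := tnth [tuple t *: x; t *: y; hat W (unit A - t *: a)].
have ens : ensemble B (marginalB A W) b.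
  split=> [i|]; last first.
    by rewrite !big_ord_recl big_ord0 /b /= addr0 addrA -scalerDr -xy split_w.
  by case: i => -[|[|[|//]]] ? //; rewrite /b /tnth /=; apply: BZ => //; exact: ltW.
have [e [[e_eff _] he]] := steer _ _ ens.
have realised i z : b i = t *: z -> (hat W @` dual_cone (cone A)) z.
  move=> bz; exists (t^-1 *: e i).
    by apply: (dual_cone_convex _).2.2; [rewrite invr_ge0 ltW | exact: (e_eff i).1].
  by rewrite hatZ he bz scalerA mulVf ?gt_eqF // scale1r.
by split; [exact: (realised ord0) | exact: (realised (lift ord0 ord0))].
Qed.

End StateSpaces.

Theorem lemma5p2 (R : realType) (n m : nat)
  (A : state_space R n) (B : state_space R m) (W : 'M[R]_(n, m)) :
  is_state A B W -> steering A B W ->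
  hat W @` dual_cone (cone A) = Face B (marginalB A W).
Proof.
move=> [W_max _] steer; apply/seteqP; split=> [x imx F Fface Fw | x Fx].
  exact: hat_dual_cone_sub_face Fface Fw _ imx.
apply: Fx; first exact: is_face_hat_dual_cone.
by exists (unit A); first exact: unit_dual_cone.
Qed.
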